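(* Let $(\mathcal{A},P,\Theta)$ be a finitary proto-exact category with duality, admitting finite coproducts with $P$ additive, and satisfying the Reduction Assumption. If $\mathcal{A}$ has the finite direct decomposition property, then any symmetric form $N$ in $\mathcal{A}$ admits at most finitely many orthogonal decompositions $H(U)\oplus M\simeq_P N$ (with $U$ an object and $M$ a symmetric form), up to isomorphism in $U$ and isometry in $M$.
   Context: Proto-exact category: pointed category with inflations and deflations (containing isomorphisms, closed under composition, $0\to U$ inflations, $U\to0$ deflations) such that squares with horizontal inflations and vertical deflations are pullbacks iff pushouts, and cospans $W\rightarrowtail X\twoheadleftarrow V$, spans $W\twoheadleftarrow U\rightarrowtail V$ complete to such squares. Duality: $P:\mathcal{A}^{op}\to\mathcal{A}$, natural iso $\Theta:\mathrm{id}\Rightarrow PP^{op}$ with $P(\Theta_U)\Theta_{P(U)}=\mathrm{id}$; exact: $P(0)\simeq0$, $\phi$ inflation iff $P(\phi)$ deflation, biCartesian squares preserved and reflected. Finitary: essentially small, finite Hom and Ext$^1$ sets. Symmetric form $(N,\psi_N)$: iso $\psi_N:N\to P(N)$ with $P(\psi_N)\Theta_N=\psi_N$; isometry $\phi$: iso with $\psi_M=P(\phi)\psi_N\phi$, written $M\simeq_PN$. Sum: $(M\oplus N,\psi_M\oplus\psi_N)$. Hyperbolic form $H(U)=(U\oplus P(U),\left(\begin{smallmatrix}0&\mathrm{id}_{P(U)}\\ \Theta_U&0\end{smallmatrix}\right))$. Reduction Assumption: for each isotropic inflation $U\rightarrowtail N$ (i.e. $P(i)\psi_Ni=0$ and $U\to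 U^\perp:=\ker(P(i)\psi_N)$ an inflation) the object $U^\perp/U$ carries a compatible symmetric form, unique up to isometry. Finite direct decomposition property: each object $W$ admits only finitely many decompositions $U\oplus V\simeq W$ up to isomorphism. *)

From Stdlib Require Import List.
Set Implicit Arguments.
Unset Strict Implicit.

Record category := Category {
  ob :> Type;
  hom : ob -> ob -> Type;
  idm : forall X, hom X X;
  comp : forall X Y Z, hom Y Z -> hom X Y -> hom X Z;
  comp_assoc : forall X Y Z W (h : hom Z W) (g : hom Y Z) (f : hom X Y),
      comp h (comp g f) = comp (comp h g) f;
  comp_idl : forall X Y (f : hom X Y), comp (idm Y) f = f;
  comp_idr : forall X Y (f : hom X Y), comp f (idm X) = f }.
Arguments hom {c} X Y.
Arguments idm {c} X.
Arguments comp {c X Y Z} g f.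

Notation "g ∘ f" := (comp g f) (at level 40, left associativity).

Section CatDefs.
Variable C : category.

Definition is_iso {X Y : C} (f : hom X Y) :=
  exists g : hom Y X, g ∘ f = idm X /\ f ∘ g = idm Y.

Definition iso_ob (X Y : C) := exists f : hom X Y, is_iso f.

(* A square          f
                U -------> V
              g |          | h
                v          v
                W -------> X
                     k                                                   *)
Definition commutes {U V W X : C} (f : hom U V) (g : hom U W)
  (h : hom V X) (k : hom W X) := h ∘ f = k ∘ g.

Definition is_pullback {U V W X : C} (f : hom U V) (g : hom U W)
  (h : hom V X) (k : hom W X) :=
  commutes f g h k /\
  forall (T : C) (a : hom T V) (b : hom T W), h ∘ a = k ∘ b ->
    exists t : hom T U, (f ∘ t = a /\ g ∘ t = b) /\
      forall t' : hom T U, f ∘ t' = a -> g ∘ t' = b -> t' = t.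

Definition is_pushout {U V W X : C} (f : hom U V) (g : hom U W)
  (h : hom V X) (k : hom W X) :=
  commutes f g h k /\
  forall (T : C) (a : hom V T) (b : hom W T), a ∘ f = b ∘ g ->
    exists t : hom X T, (t ∘ h = a /\ t ∘ k = b) /\
      forall t' : hom X T, t' ∘ h = a -> t' ∘ k = b -> t' = t.

Definition is_bicart {U V W X : C} (f : hom U V) (g : hom U W)
  (h : hom V X) (k : hom W X) :=
  is_pullback f g h k /\ is_pushout f g h k.
End CatDefs.

Record proto_exact := ProtoExact {
  pe_cat :> category;
  zero : pe_cat;
  from0 : forall X : pe_cat, hom zero X;
  to0 : forall X : pe_cat, hom X zero;
  from0_uniq : forall X (f : hom zero X), f = from0 X;
  to0_uniq : forall X (f : hom X zero), f = to0 X;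
  infl : forall X Y : pe_cat, hom X Y -> Prop;
  defl : forall X Y : pe_cat, hom X Y -> Prop;
  iso_infl : forall X Y (f : hom X Y), is_iso f -> infl f;
  iso_defl : forall X Y (f : hom X Y), is_iso f -> defl f;
  infl_comp : forall X Y Z (g : hom Y Z) (f : hom X Y),
      infl f -> infl g -> infl (g ∘ f);
  defl_comp : forall X Y Z (g : hom Y Z) (f : hom X Y),
      defl f -> defl g -> defl (g ∘ f);
  zero_infl : forall U, infl (from0 U);
  zero_defl : forall U, defl (to0 U);
  pb_iff_po : forall U V W X (f : hom U V) (g : hom U W) (h : hom V X)
      (k : hom W X), infl f -> infl k -> defl g -> defl h ->
      (is_pullback f g h k <-> is_pushout f g h k);
  cospan_complete : forall W X V (k : hom W X) (h : hom V X),
      infl k -> defl h ->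
      exists U (f : hom U V) (g : hom U W),
        infl f /\ defl g /\ is_bicart f g h k;
  span_complete : forall U V W (f : hom U V) (g : hom U W),
      infl f -> defl g ->
      exists X (h : hom V X) (k : hom W X),
        defl h /\ infl k /\ is_bicart f g h k }.
Arguments zero {p}.
Arguments from0 {p} X.
Arguments to0 {p} X.
Arguments infl {p X Y} f.
Arguments defl {p X Y} f.

Definition zmor {A : proto_exact} (X Y : A) : hom X Y := from0 Y ∘ to0 X.

Record duality (A : proto_exact) := Duality {
  Pob : A -> A;
  Pm : forall X Y : A, hom X Y -> hom (Pob Y) (Pob X);
  Pm_id : forall X, Pm (idm X) = idm (Pob X);
  Pm_comp : forall X Y Z (g : hom Y Z) (f : hom X Y),
      Pm (g ∘ f) = Pm f ∘ Pm g;
  Th : forall X : A, hom X (Pob (Pob X));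
  Th_nat : forall X Y (f : hom X Y), Th Y ∘ f = Pm (Pm f) ∘ Th X;
  Th_iso : forall X, is_iso (Th X);
  Th_triangle : forall X, Pm (Th X) ∘ Th (Pob X) = idm (Pob X) }.
Arguments Pob {A} d X.
Arguments Pm {A} d {X Y} f.
Arguments Th {A} d X.

Section DualityDefs.
Variable A : proto_exact.
Variable D : duality A.
Local Notation P := (Pob D).
Local Notation Pf := (Pm D).

Definition exact_duality :=
  iso_ob (P zero) zero /\
  (forall X Y (f : hom X Y), infl f <-> defl (Pf f)) /\
  (forall U V W X (f : hom U V) (g : hom U W) (h : hom V X) (k : hom W X),
     commutes f g h k ->
     (is_bicart f g h k <-> is_bicart (Pf h) (Pf k) (Pf f) (Pf g))).

Definition is_sym_form {N : A} (psi : hom N (P N)) :=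
  is_iso psi /\ Pf psi ∘ Th D N = psi.

Definition isometric {M N : A} (psiM : hom M (P M)) (psiN : hom N (P N)) :=
  exists phi : hom M N, is_iso phi /\ psiM = Pf phi ∘ psiN ∘ phi.

(* For an isotropic inflation i : U >-> N, U^perp is a
   kernel K (j : K >-> N) of the deflation P(i) psi_N, k : U >-> K is the
   induced inflation, and U^perp/U is a cokernel Q (q : K ->> Q) of k.
   A form psi on Q is compatible when P(q) psi q = P(j) psi_N j. *)
Definition reduction_assumption :=
  forall (N : A) (psiN : hom N (P N)), is_sym_form psiN ->
  forall (U : A) (i : hom U N), infl i -> Pf i ∘ psiN ∘ i = zmor U (P U) ->
  forall (K : A) (j : hom K N), infl j ->
    is_bicart j (to0 K) (Pf i ∘ psiN) (from0 (P U)) ->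
  forall k : hom U K, j ∘ k = i -> infl k ->
  forall (Q : A) (q : hom K Q), defl q ->
    is_bicart k (to0 U) q (from0 Q) ->
    (exists psiQ : hom Q (P Q),
        is_sym_form psiQ /\ Pf q ∘ psiQ ∘ q = Pf j ∘ psiN ∘ j) /\
    (forall psi1 psi2 : hom Q (P Q),
        is_sym_form psi1 -> is_sym_form psi2 ->
        Pf q ∘ psi1 ∘ q = Pf j ∘ psiN ∘ j ->
        Pf q ∘ psi2 ∘ q = Pf j ∘ psiN ∘ j ->
        isometric psi1 psi2).
End DualityDefs.

(* Finitary: finite Hom sets and finite Ext^1 sets.                      *)
Record conflation (A : proto_exact) (Z X : A) := Conflation {
  cf_mid : A;
  cf_i : hom Z cf_mid;
  cf_p : hom cf_mid X;
  cf_infl : infl cf_i;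
  cf_defl : defl cf_p;
  cf_bicart : is_bicart cf_i (to0 Z) cf_p (from0 X) }.

Definition conf_equiv (A : proto_exact) (Z X : A) (c c' : conflation Z X) :=
  exists phi : hom (cf_mid c) (cf_mid c'),
    is_iso phi /\ phi ∘ cf_i c = cf_i c' /\ cf_p c' ∘ phi = cf_p c.

Definition finitary (A : proto_exact) :=
  (forall X Y : A, exists l : list (hom X Y), forall f, In f l) /\
  (forall X Z : A, exists l : list (conflation Z X),
      forall c, exists c', In c' l /\ conf_equiv c c').

(* Chosen binary coproducts (with the zero object: finite coproducts).  *)
Record coproducts (C : category) := Coproducts {
  cp : C -> C -> C;
  cinl : forall X Y : C, hom X (cp X Y);
  cinr : forall X Y : C, hom Y (cp X Y);
  copair : forall X Y T : C, hom X T -> hom Y T -> hom (cp X Y) T;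
  copair_inl : forall X Y T (a : hom X T) (b : hom Y T),
      copair a b ∘ cinl X Y = a;
  copair_inr : forall X Y T (a : hom X T) (b : hom Y T),
      copair a b ∘ cinr X Y = b;
  copair_uniq : forall X Y T (t : hom (cp X Y) T),
      t = copair (t ∘ cinl X Y) (t ∘ cinr X Y) }.
Arguments cp {C} c X Y.
Arguments cinl {C} c X Y.
Arguments cinr {C} c X Y.
Arguments copair {C} c {X Y T} a b.

Section CoprodDefs.
Variable A : proto_exact.
Variable D : duality A.
Variable S : coproducts A.
Local Notation P := (Pob D).
Local Notation Pf := (Pm D).
Local Notation "X ⊕ Y" := (cp S X Y) (at level 50).

Definition pr1 (X Y : A) : hom (X ⊕ Y) X := copair S (idm X) (zmor Y X).
Definition pr2 (X Y : A) : hom (X ⊕ Y) Y := copair S (zmor X Y) (idm Y).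

Definition summ {X Y X' Y' : A} (f : hom X X') (g : hom Y Y') :
  hom (X ⊕ Y) (X' ⊕ Y') := copair S (cinl S X' Y' ∘ f) (cinr S X' Y' ∘ g).

Definition canP (X Y : A) : hom (P X ⊕ P Y) (P (X ⊕ Y)) :=
  copair S (Pf (pr1 X Y)) (Pf (pr2 X Y)).

Definition P_additive := forall X Y : A, is_iso (canP X Y).

Definition form_sum {M N : A} (psiM : hom M (P M)) (psiN : hom N (P N)) :
  hom (M ⊕ N) (P (M ⊕ N)) := canP M N ∘ summ psiM psiN.

(* hyperbolic form on U (+) P(U), matrix ((0, id_{P U}), (Theta_U, 0)) *)
Definition hyp (U : A) : hom (U ⊕ P U) (P (U ⊕ P U)) :=
  canP U (P U) ∘ copair S (cinr S (P U) (P (P U)) ∘ Th D U)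
                           (cinl S (P U) (P (P U)) ∘ idm (P U)).

Definition fin_direct_decomp :=
  forall W : A, exists l : list (A * A),
    forall U V : A, iso_ob (U ⊕ V) W ->
      exists p, In p l /\ iso_ob U (fst p) /\ iso_ob V (snd p).
End CoprodDefs.

Arguments exact_duality {A} D.
Arguments is_sym_form {A} D {N} psi.
Arguments isometric {A} D {M N} psiM psiN.
Arguments reduction_assumption {A} D.
Arguments P_additive {A} D S.
Arguments form_sum {A} D S {M N} psiM psiN.
Arguments hyp {A} D S U.
Arguments fin_direct_decomp {A} S.
Arguments canP {A} D S X Y.
Arguments pr1 {A} S X Y.
Arguments pr2 {A} S X Y.
Arguments summ {A} S {X Y X' Y'} f g.

(* Finite direct decomposition leaves, up to isomorphism, finitely many pairs
   (X, Y) with X (+) Y ~ N.  In a decomposition H(U) (+) M ~ N the summand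
   U (+) P(U) is one of these X, so a second use of the property bounds U up to
   isomorphism; and M ~ Y, so transporting psi_M along this isomorphism gives
   an isometric form on Y, of which there are finitely many because
   Hom(Y, P(Y)) is finite. *)

From Stdlib Require Import List.
Set Implicit Arguments.

Section FiniteUpTo.
Variables (T : Type) (R : T -> T -> Prop).

Definition finite_up_to (Q : T -> Prop) :=
  exists l : list T, forall x, Q x -> exists y, In y l /\ R x y.

Lemma finite_up_to_union (B : Type) (Q : B -> T -> Prop) (l : list B) :
  (forall b, finite_up_to (Q b)) ->
  finite_up_to (fun x => exists b, In b l /\ Q b x).
Proof.
  intros Hfin; induction l as [|b l [L HL]].
  - exists nil; intros x [b [[] _]].
  - destruct (Hfin b) as [Lb HLb].
    exists (Lb ++ L); intros x [b' [[<-|Hb'] Hx]].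
    + destruct (HLb x Hx) as [y [Hy Rxy]].
      exists y; split; [apply in_or_app; left|]; assumption.
    + destruct (HL x (ex_intro _ b' (conj Hb' Hx))) as [y [Hy Rxy]].
      exists y; split; [apply in_or_app; right|]; assumption.
Qed.
End FiniteUpTo.

Lemma finite_up_to_prod (T1 T2 : Type) (R1 : T1 -> T1 -> Prop)
    (R2 : T2 -> T2 -> Prop) (Q1 : T1 -> Prop) (Q2 : T2 -> Prop) :
  finite_up_to R1 Q1 -> finite_up_to R2 Q2 ->
  finite_up_to (fun x y => R1 (fst x) (fst y) /\ R2 (snd x) (snd y))
    (fun x => Q1 (fst x) /\ Q2 (snd x)).
Proof.
  intros [l1 H1] [l2 H2]; exists (list_prod l1 l2).
  intros [x1 x2] [Hx1 Hx2].
  destruct (H1 x1 Hx1) as [y1 [Hy1 R1xy]], (H2 x2 Hx2) as [y2 [Hy2 R2xy]].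
  exists (y1, y2); split; [apply in_prod|split]; assumption.
Qed.

Section HyperbolicDecompositions.
Variables (A : proto_exact) (D : duality A) (S : coproducts A).
Local Notation P := (Pob D).
Local Notation "X ⊕ Y" := (cp S X Y) (at level 50).

Definition form_isometric (x y : {M : A & hom M (P M)}) :=
  isometric D (projT2 x) (projT2 y).

Lemma isometric_iso_ob (M N : A) (psiM : hom M (P M)) (psiN : hom N (P N)) :
  isometric D psiM psiN -> iso_ob M N.
Proof. intros [phi [Hphi _]]; exists phi; exact Hphi. Qed.

Lemma isometric_transport (M Y : A) (psiM : hom M (P M)) (f : hom M Y) :
  is_iso f -> exists psiY : hom Y (P Y), isometric D psiM psiY.
Proof.
  intros Hf; pose proof Hf as [g [Hgf Hfg]].
  exists (Pm D g ∘ psiM ∘ g), f; split; [exact Hf|].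
  rewrite !comp_assoc, <- Pm_comp, Hgf, Pm_id, comp_idl.
  rewrite <- comp_assoc, Hgf, comp_idr; reflexivity.
Qed.

Lemma forms_finite_up_to_isometry (Y : A) :
  finitary A ->
  finite_up_to form_isometric (fun x => iso_ob (projT1 x) Y).
Proof.
  intros [Hhom _]; destruct (Hhom Y (P Y)) as [lh Hlh].
  exists (map (existT (fun M => hom M (P M)) Y) lh).
  intros [M psiM] [f Hf]; destruct (isometric_transport psiM Hf) as [psiY Hiso].
  exists (existT _ Y psiY); split; [apply in_map, Hlh | exact Hiso].
Qed.

Lemma summands_finite_up_to_iso (W : A) :
  fin_direct_decomp S ->
  finite_up_to (@iso_ob A) (fun U => exists V, iso_ob (U ⊕ V) W).
Proof.
  intros Hdec; destruct (Hdec W) as [l Hl].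
  exists (map fst l); intros U [V HUV].
  destruct (Hl U V HUV) as [p [Hp [HU _]]].
  exists (fst p); split; [apply in_map|]; assumption.
Qed.

Lemma hyperbolic_decompositions_finite (N : A) :
  finitary A -> fin_direct_decomp S ->
  finite_up_to
    (fun x y => iso_ob (fst x) (fst y) /\ form_isometric (snd x) (snd y))
    (fun x => iso_ob ((fst x ⊕ P (fst x)) ⊕ projT1 (snd x)) N).
Proof.
  intros Hfin Hdec; destruct (Hdec N) as [l Hl].
  destruct (finite_up_to_union
    (R := fun x y => iso_ob (fst x) (fst y) /\ form_isometric (snd x) (snd y))
    (fun p x => (exists V, iso_ob (fst x ⊕ V) (fst p)) /\
                iso_ob (projT1 (snd x)) (snd p)) l)
    as [L HL].
  { intros p; exact (finite_up_to_prod
      (summands_finite_up_to_iso (fst p) Hdec)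
      (forms_finite_up_to_isometry (snd p) Hfin)). }
  exists L; intros x Hx; apply HL.
  destruct (Hl _ _ Hx) as [p [Hp [HX HY]]].
  exists p; split; [|split; [exists (P (fst x))|]]; assumption.
Qed.
End HyperbolicDecompositions.

Theorem lemma2p7 (A : proto_exact) (D : duality A) (S : coproducts A) :
  exact_duality D -> finitary A -> P_additive D S ->
  reduction_assumption D -> fin_direct_decomp S ->
  forall (N : A) (psiN : hom N (Pob D N)), is_sym_form D psiN ->
  exists l : list (A * {M : A & hom M (Pob D M)}),
    forall (U M : A) (psiM : hom M (Pob D M)), is_sym_form D psiM ->
      isometric D (form_sum D S (hyp D S U) psiM) psiN ->
      exists e, In e l /\ iso_ob U (fst e) /\ isometric D psiM (projT2 (snd e)).
Proof.
  intros _ Hfin _ _ Hdec N psiN _.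
  destruct (hyperbolic_decompositions_finite D N Hfin Hdec) as [l Hl].
  exists l; intros U M psiM _ Hiso.
  exact (Hl (U, existT _ M psiM) (isometric_iso_ob Hiso)).
Qed.
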